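(* Let $\Omega\subseteq\mathbb{R}^n$ be closed and convex, $f:\mathbb{R}^n\to\mathbb{R}$ continuously differentiable, and $h:\mathbb{R}^n\to(-\infty,+\infty]$ proper, lower semicontinuous and convex with $\mathrm{dom}\,h$ closed, bounded and contained in $\Omega$; let $\phi = f+h$. Let $A_{k-1}>0$, $a_{k-1}=\frac{1+\sqrt{1+4A_{k-1}}}{2}$, $A_k=A_{k-1}+a_{k-1}$. Let $y_{k-1}\in\mathrm{dom}\,h$, $x_{k-1}\in\Omega$, $\tilde x_k = \frac{A_{k-1}}{A_k}y_{k-1}+\frac{a_{k-1}}{A_k}x_{k-1}$, $\lambda_k>0$, $\tau_k\ge0$ and $\gamma\in(0,1)$. Let $$y_k=\operatorname{argmin}_{u\in\mathbb{R}^n}\left\{\ell_f(u;\tilde x_k)+h(u)+\frac{1+\tau_k}{2\lambda_k}\|u-\tilde x_k\|^2\right\},$$ with $\ell_f(u;\tilde x_k) := f(\tilde x_k)+\langle\nabla f(\tilde x_k),u-\tilde x_k\rangle$, and assume that either $y_k=\tilde x_k$, or $U_k\lambda_k\le\gamma$ where $U_k := \frac{2[f(y_k)-\ell_f(y_k;\tilde x_k)]}{\|y_k-\tilde x_k\|^2}$. Define $$\tilde\gamma_k(u):=\ell_f(u;\tilde x_k)+h(u)+\frac{\tau_k}{2\lambda_k}\|u-\tilde x_k\|^2,\qquad \gamma_k(u):=\tilde\gamma_k(y_k)+\frac{1}{\lambda_k}\langle\tilde x_k-y_k,u-y_k\rangle+\frac{\tau_k}{2\lambda_k}\|u-y_k\|^2,$$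 and let $x_k$ be the unique minimizer over $u\in\Omega$ of $a_{k-1}\gamma_k(u)+\frac{1}{2\lambda_k}\|u-x_{k-1}\|^2$. Then for every $u\in\Omega$, $$\lambda_kA_k\phi(y_k)+\frac{\tau_ka_{k-1}+1}{2}\|u-x_k\|^2+\frac{(1-\gamma)A_k}{2}\|y_k-\tilde x_k\|^2 \le \lambda_kA_{k-1}\gamma_k(y_{k-1})+\lambda_ka_{k-1}\gamma_k(u)+\frac12\|u-x_{k-1}\|^2 .$$
   Context: $\|\cdot\|$ and $\langle\cdot,\cdot\rangle$ are the Euclidean norm and inner product on $\mathbb{R}^n$; $\mathrm{dom}\,h=\{u:h(u)<+\infty\}$. *)

From HB Require Import structures.
From mathcomp Require Import all_boot all_order all_algebra.
From mathcomp Require Import all_classical all_reals all_analysis.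
Set Implicit Arguments. Unset Strict Implicit. Unset Printing Implicit Defensive.
Import Order.TTheory GRing.Theory Num.Theory.
Import numFieldNormedType.Exports.
Local Open Scope classical_set_scope.
Local Open Scope ring_scope.

Section defs.
Context {R : realType} {n : nat}.
Local Notation V := 'rV[R]_n.

Definition dotp (u v : V) : R := \sum_(i < n) u ord0 i * v ord0 i.
Definition enorm (u : V) : R := Num.sqrt (dotp u u).

Definition grad (f : V -> R) (x : V) : V := \row_(i < n) ('d f x (delta_mx ord0 i : V)).

Definition C1 (f : V -> R) : Prop :=
  (forall x : V, differentiable f x) /\ continuous (grad f).

Definition convex_set_ (S : set V) : Prop :=
  forall (x y : V) (t : R), S x -> S y -> 0 <= t <= 1 -> S (t *: x + (1 - t) *: y).

Definition ebounded (S : set V) : Prop :=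
  exists M : R, forall x, S x -> enorm x <= M.

Definition dom (h : V -> \bar R) : set V := [set x | (h x < +oo)%E].

Definition proper_fun (h : V -> \bar R) : Prop :=
  (forall x, h x != -oo%E) /\ (exists x, h x != +oo%E).

(* convexity of an extended-valued function never equal to -oo *)
Definition convex_fun (h : V -> \bar R) : Prop :=
  forall (x y : V) (t : R), 0 < t < 1 ->
    (h (t *: x + (1 - t) *: y)%R <= t%:E * h x + (1 - t)%:E * h y)%E.

Definition lin (f : V -> R) (u x : V) : R := f x + dotp (grad f x) (u - x).

End defs.

From HB Require Import structures.
From mathcomp Require Import all_boot all_order all_algebra.
From mathcomp Require Import all_classical all_reals all_analysis.
From mathcomp Require Import ring lra.
Import Order.TTheory GRing.Theory Num.Theory.
Import numFieldNormedType.Exports.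
Local Open Scope classical_set_scope.
Local Open Scope ring_scope.

(* Once h(y_k) is known to be finite (it is never -oo, and if it were +oo the
   right-hand side would be +oo), every quantity is real and the aggregate
   model gamma_k is a quadratic  Q(v) = C + <d, v - y> + tau/2 ||v - y||^2
   (scaled by lambda_k).  The estimate then combines four facts:
   - quadratic growth: a quadratic minimized over a convex set grows at least
     like its curvature term away from the minimizer (this replaces the
     variational inequality characterizing x_k);
   - exact convexity of Q along the convex combination defining x~_k;
   - the momentum identity a^2 = A, which turns ||x_k - x_{k-1}||^2 into the
     missing term A ||z - x~_k||^2 of a polarization identity;
   - the curvature condition on y_k, i.e. a descent inequality for f. *)

Notation sqn u := (dotp u u).

Section InnerProduct.
Context {R : realType} {n : nat}.
Implicit Types (u v w : 'rV[R]_n) (k : R).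

Lemma dotpC u v : dotp u v = dotp v u.
Proof. by apply: eq_bigr => i _; rewrite mulrC. Qed.

Lemma dotpDl u v w : dotp (u + v) w = dotp u w + dotp v w.
Proof. by rewrite /dotp -big_split; apply: eq_bigr => i _; rewrite mxE mulrDl. Qed.

Lemma dotpDr u v w : dotp w (u + v) = dotp w u + dotp w v.
Proof. by rewrite !(dotpC w) dotpDl. Qed.

Lemma dotpZl k u v : dotp (k *: u) v = k * dotp u v.
Proof. by rewrite /dotp mulr_sumr; apply: eq_bigr => i _; rewrite mxE mulrA. Qed.

Lemma dotpZr k u v : dotp v (k *: u) = k * dotp v u.
Proof. by rewrite !(dotpC v) dotpZl. Qed.

Lemma dotpNr u v : dotp v (- u) = - dotp v u.
Proof. by rewrite -scaleN1r dotpZr mulN1r. Qed.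

Lemma dotp0r u : dotp u 0 = 0.
Proof. by rewrite -(scale0r 0) dotpZr mul0r. Qed.

Lemma dotp_ge0 u : 0 <= sqn u.
Proof. by apply: sumr_ge0 => i _; rewrite -expr2 sqr_ge0. Qed.

Lemma dotp_eq0 u : sqn u = 0 -> u = 0.
Proof.
move=> /eqP; rewrite /dotp psumr_eq0 => [/allP u0|i _]; last first.
  by rewrite -expr2 sqr_ge0.
apply/matrixP => i j; rewrite mxE (ord1 i).
by have := u0 j (mem_index_enum _); rewrite /= mulf_eq0 orbb => /eqP.
Qed.

Lemma enorm_sqr u : enorm u ^+ 2 = sqn u.
Proof. by rewrite sqr_sqrtr // dotp_ge0. Qed.

Lemma sqnD u v : sqn (u + v) = sqn u + 2 * dotp u v + sqn v.
Proof. by rewrite !dotpDl !dotpDr (dotpC v u); ring. Qed.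

Lemma sqnZ k u : sqn (k *: u) = k ^+ 2 * sqn u.
Proof. by rewrite dotpZl dotpZr mulrA -expr2. Qed.

Lemma sqnN u : sqn (- u) = sqn u.
Proof. by rewrite -scaleN1r sqnZ sqrrN expr1n mul1r. Qed.

Lemma sqn_line u v w k :
  sqn (u + k *: w - v) = sqn (u - v) + k * (2 * dotp (u - v) w) + k ^+ 2 * sqn w.
Proof.
have -> : u + k *: w - v = (u - v) + k *: w by rewrite addrAC.
by rewrite (sqnD (u - v) (k *: w)) sqnZ dotpZr; ring.
Qed.

Lemma sqn_convex u v w k :
  sqn (k *: u + (1 - k) *: v - w)
  = k * sqn (u - w) + (1 - k) * sqn (v - w) - k * (1 - k) * sqn (u - v).
Proof.
have -> : k *: u + (1 - k) *: v - w = (v - w) + k *: (u - v).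
  by apply/rowP => i; rewrite !mxE; ring.
have -> : u - w = (v - w) + (u - v) by apply/rowP => i; rewrite !mxE; ring.
by rewrite (sqnD (v - w) (k *: _)) (sqnD (v - w) (u - v)) sqnZ dotpZr; ring.
Qed.

Lemma dotp_polarization u w :
  dotp u w + sqn (w - u) / 2 = (sqn w + sqn u) / 2.
Proof. by rewrite (sqnD w (- u)) dotpNr sqnN (dotpC w u); field. Qed.

End InnerProduct.

Section QuadraticModel.
Context {R : realType} {n : nat}.
Implicit Types (c mu k : R) (g y v x d : 'rV[R]_n).

Definition quad c mu g y v : R := c + dotp g (v - y) + mu / 2 * sqn (v - y).

Lemma quad_line c mu g y x d k :
  quad c mu g y (x + k *: d)
  = quad c mu g y x + k * (dotp g d + mu * dotp (x - y) d) + k ^+ 2 * (mu / 2 * sqn d).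
Proof.
rewrite /quad sqn_line.
have -> : x + k *: d - y = (x - y) + k *: d by rewrite addrAC.
by rewrite (dotpDr (x - y)) dotpZr; field.
Qed.

Lemma quad_convex c mu g y x v k :
  k * quad c mu g y x + (1 - k) * quad c mu g y v
  = quad c mu g y (k *: x + (1 - k) *: v) + k * (1 - k) * (mu / 2 * sqn (x - v)).
Proof.
rewrite /quad sqn_convex.
have -> : k *: x + (1 - k) *: v - y = k *: (x - y) + (1 - k) *: (v - y).
  by apply/rowP => i; rewrite !mxE; ring.
by rewrite (dotpDr (k *: _)) !dotpZr; ring.
Qed.

Lemma quad_ge_affine c mu g y v : 0 <= mu -> c + dotp g (v - y) <= quad c mu g y v.
Proof. by move=> mu0; rewrite lerDl mulr_ge0 ?divr_ge0 ?dotp_ge0. Qed.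

Lemma quad_mix_lower c mu g y p x s t :
  0 <= mu -> 0 <= s -> 0 <= t -> 0 < s + t ->
  (s + t) * (c + dotp g ((s / (s + t)) *: p + (t / (s + t)) *: x - y))
  <= s * quad c mu g y p + t * quad c mu g y x.
Proof.
move=> mu0 s0 t0 st0; set w := s / (s + t).
have tw : t / (s + t) = 1 - w by rewrite /w; field; rewrite gt_eqF.
have -> : s * quad c mu g y p + t * quad c mu g y x
          = (s + t) * (w * quad c mu g y p + (1 - w) * quad c mu g y x).
  by rewrite -tw /w; field; rewrite gt_eqF.
have w01 : 0 <= w <= 1.
  by rewrite /w ler_pdivrMr // mul1r lerDl t0 divr_ge0 // ltW.
rewrite tw quad_convex ler_pM2l //; apply: le_trans (quad_ge_affine _ _ _ _ _ mu0) _.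
case/andP: w01 => w0 w1.
rewrite lerDl; apply: mulr_ge0; first by rewrite mulr_ge0 ?subr_ge0.
by rewrite mulr_ge0 ?divr_ge0 ?dotp_ge0.
Qed.

End QuadraticModel.

Lemma slope_nonneg (R : realType) (L M : R) :
  (forall t : R, 0 < t <= 1 -> 0 <= t * L + t ^+ 2 * M) -> 0 <= L.
Proof.
move=> H; rewrite leNgt; apply/negP => L0.
have absM := normr_ge0 M; have M_le := ler_norm M.
pose t := - L / (2 * (`|M| - L)).
have den0 : 0 < 2 * (`|M| - L) by lra.
have t0 : 0 < t by rewrite divr_gt0 //; lra.
have t1 : t <= 1 by rewrite ler_pdivrMr //; lra.
have tM : t * `|M| <= - L / 2.
  rewrite /t mulrAC ler_pdivrMr // -mulrA ler_wpM2l //; first lra.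
  by rewrite mulrA; lra.
have := H t; rewrite t0 t1 => /(_ isT).
have : t * M <= t * `|M| by rewrite ler_pM2l.
by rewrite expr2 -mulrA -mulrDr pmulr_rge0 //; lra.
Qed.

Section Growth.
Context {R : realType} {n : nat}.
Implicit Types (S : set 'rV[R]_n) (x u y g p : 'rV[R]_n).

Lemma min_quadratic_growth S (Phi : 'rV[R]_n -> R) (L M : R) x u :
  convex_set_ S -> S x -> S u -> (forall v, S v -> Phi x <= Phi v) ->
  (forall t, Phi (x + t *: (u - x)) = Phi x + t * L + t ^+ 2 * M) ->
  Phi x + M <= Phi u.
Proof.
move=> cvS Sx Su xmin along.
have L0 : 0 <= L.
  apply: (@slope_nonneg _ _ M) => t /andP[t0 t1].
  have Sxt : S (x + t *: (u - x)).
    have -> : x + t *: (u - x) = t *: u + (1 - t) *: x.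
      by apply/rowP => i; rewrite !mxE; ring.
    by apply: cvS; rewrite ?(ltW t0) ?t1.
  by have := xmin _ Sxt; rewrite along; lra.
by have := along 1; rewrite scale1r addrC subrK expr1n !mul1r => ->; lra.
Qed.

Lemma prox_quad_growth {S} {c mu a b : R} {g y p x u} :
  convex_set_ S -> S x -> S u ->
  (forall v, S v -> a * quad c mu g y x + b * sqn (x - p)
                    <= a * quad c mu g y v + b * sqn (v - p)) ->
  a * quad c mu g y x + b * sqn (x - p) + (a * mu / 2 + b) * sqn (u - x)
  <= a * quad c mu g y u + b * sqn (u - p).
Proof.
move=> cvS Sx Su xmin.
apply: (@min_quadratic_growth S (fun v => a * quad c mu g y v + b * sqn (v - p))
  (a * (dotp g (u - x) + mu * dotp (x - y) (u - x)) + b * (2 * dotp (x - p) (u - x)))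
  _ x u cvS Sx Su xmin).
by move=> t; rewrite quad_line sqn_line; ring.
Qed.

End Growth.

Lemma momentum_coef_sqr {R : realType} {Ap a : R} :
  0 < Ap -> a = (1 + Num.sqrt (1 + 4 * Ap)) / 2 -> 0 < a /\ a ^+ 2 = Ap + a.
Proof.
move=> Ap0 ->; have s0 := sqrtr_ge0 (1 + 4 * Ap).
have s2 : Num.sqrt (1 + 4 * Ap) ^+ 2 = 1 + 4 * Ap by rewrite sqr_sqrtr //; lra.
by split; lra.
Qed.

Section AcceleratedStep.
Context {R : realType} {n : nat}.
Implicit Types (yp xp xt x y u : 'rV[R]_n).

Lemma curvature_descent {f : 'rV[R]_n -> R} {x y} {lam gam : R} :
  (y = x \/ 2 * (f y - lin f y x) / enorm (y - x) ^+ 2 * lam <= gam) ->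
  2 * lam * (f y - lin f y x) <= gam * sqn (y - x).
Proof.
have at_x : y = x -> 2 * lam * (f y - lin f y x) <= gam * sqn (y - x).
  by move=> ->; rewrite /lin subrr !dotp0r addr0 subrr !mulr0.
case=> [/at_x // |]; rewrite enorm_sqr.
have [/dotp_eq0/subr0_eq/at_x // | N0] := eqVneq (sqn (y - x)) 0.
have Npos : 0 < sqn (y - x) by rewrite lt0r N0 dotp_ge0.
by rewrite mulrAC ler_pdivrMr // => ?; lra.
Qed.

(* With a^2 = A and x~ = (A'/A) y' + (a/A) x', the point z = (A'/A) y' + (a/A) x
   satisfies  z - x~ = (x - x') / a,  which makes the prox term pay for the
   polarization defect:  A <x~ - y, z - y> + ||x - x'||^2 / 2 >= A/2 ||y - x~||^2. *)
Lemma momentum_bound (Ap a A : R) yp xp xt y x :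
  0 < a -> a ^+ 2 = A -> xt = (Ap / A) *: yp + (a / A) *: xp ->
  A / 2 * sqn (y - xt)
  <= A * dotp (xt - y) ((Ap / A) *: yp + (a / A) *: x - y) + 2^-1 * sqn (x - xp).
Proof.
move=> a0 a2 ext; have A0 : 0 < A by rewrite -a2 exprn_gt0.
pose w := (Ap / A) *: yp + (a / A) *: x - y.
have shift : w - (xt - y) = (a / A) *: (x - xp).
  by rewrite /w ext; apply/rowP => i; rewrite !mxE; ring.
have prox_term : 2^-1 * sqn (x - xp) = A * (sqn (w - (xt - y)) / 2).
  by rewrite shift sqnZ -a2; field; rewrite gt_eqF.
rewrite prox_term -mulrDr dotp_polarization -opprB sqnN.
by have := mulr_ge0 (ltW A0) (dotp_ge0 w); lra.
Qed.

Lemma aggregate_bound {S : set 'rV[R]_n} {C tau Ap a A : R} {yp xp xt y x u} :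
  convex_set_ S -> S x -> S u ->
  0 <= tau -> 0 <= Ap -> 0 < a -> a ^+ 2 = A -> A = Ap + a ->
  xt = (Ap / A) *: yp + (a / A) *: xp ->
  (forall v, S v -> a * quad C tau (xt - y) y x + 2^-1 * sqn (x - xp)
                    <= a * quad C tau (xt - y) y v + 2^-1 * sqn (v - xp)) ->
  A * C + A / 2 * sqn (y - xt) + (tau * a + 1) / 2 * sqn (u - x)
  <= Ap * quad C tau (xt - y) y yp + a * quad C tau (xt - y) y u
     + 2^-1 * sqn (u - xp).
Proof.
move=> cvS Sx Su tau0 Ap0 a0 a2 eA ext xmin.
have growth := prox_quad_growth cvS Sx Su xmin.
have coef : a * tau / 2 + 2^-1 = (tau * a + 1) / 2 by field.
rewrite coef in growth.
have Apa0 : 0 < Ap + a by lra.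
have mix := quad_mix_lower C tau (xt - y) y yp x Ap a tau0 Ap0 (ltW a0) Apa0.
rewrite -eA mulrDr in mix.
have := momentum_bound Ap a A yp xp xt y x a0 a2 ext.
by lra.
Qed.

End AcceleratedStep.

Theorem lemma4p7 (R : realType) (n : nat)
  (Omega : set 'rV[R]_n) (f : 'rV[R]_n -> R) (h : 'rV[R]_n -> \bar R)
  (Aprev a A lam tau gam : R) (yprev xprev xt yk xk : 'rV[R]_n) :
  closed Omega -> convex_set_ Omega ->
  C1 f ->
  proper_fun h -> lower_semicontinuous h -> convex_fun h ->
  closed (dom h) -> ebounded (dom h) -> dom h `<=` Omega ->
  0 < Aprev ->
  a = (1 + Num.sqrt (1 + 4 * Aprev)) / 2 ->
  A = Aprev + a ->
  dom h yprev -> Omega xprev ->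
  xt = (Aprev / A) *: yprev + (a / A) *: xprev ->
  0 < lam -> 0 <= tau -> 0 < gam < 1 ->
  (* y_k is the minimizer over R^n *)
  (forall u : 'rV[R]_n,
     ((lin f yk xt)%:E + h yk + ((1 + tau) / (2 * lam) * enorm (yk - xt) ^+ 2)%:E
      <= (lin f u xt)%:E + h u + ((1 + tau) / (2 * lam) * enorm (u - xt) ^+ 2)%:E)%E) ->
  (yk = xt \/
   (2 * (f yk - lin f yk xt) / enorm (yk - xt) ^+ 2) * lam <= gam) ->
  let gtilde := fun u : 'rV[R]_n =>
    ((lin f u xt)%:E + h u + (tau / (2 * lam) * enorm (u - xt) ^+ 2)%:E)%E in
  let gk := fun u : 'rV[R]_n =>
    (gtilde yk + (lam^-1 * dotp (xt - yk) (u - yk)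
                  + tau / (2 * lam) * enorm (u - yk) ^+ 2)%:E)%E in
  (* x_k is the (unique) minimizer over Omega *)
  Omega xk ->
  (forall u, Omega u ->
     (a%:E * gk xk + ((2 * lam)^-1 * enorm (xk - xprev) ^+ 2)%:E
      <= a%:E * gk u + ((2 * lam)^-1 * enorm (u - xprev) ^+ 2)%:E)%E) ->
  forall u, Omega u ->
    ((lam * A)%:E * ((f yk)%:E + h yk)
     + ((tau * a + 1) / 2 * enorm (u - xk) ^+ 2)%:E
     + ((1 - gam) * A / 2 * enorm (yk - xt) ^+ 2)%:E
     <= (lam * Aprev)%:E * gk yprev + (lam * a)%:E * gk u
        + (2^-1 * enorm (u - xprev) ^+ 2)%:E)%E.
Proof.
move=> _ cvO _ [h_nm _] _ _ _ _ _ Ap0 ea eA _ _ ext lam0 tau0 _ _ curv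
  gtilde gk Oxk xk_min u Ou.
have [a0 a2] := momentum_coef_sqr Ap0 ea; rewrite -eA in a2.
have A0 : 0 < A by rewrite -a2 exprn_gt0.
case eh: (h yk) => [H| |]; last by have := h_nm yk; rewrite eh.
  (* the model is lam^-1 times a real quadratic Q; clear lam everywhere *)
  pose Q := quad (lam * (lin f yk xt + H) + tau / 2 * sqn (yk - xt)) tau (xt - yk) yk.
  have gkE v : gk v = (lam^-1 * Q v)%:E.
    rewrite /gk /gtilde eh /Q /quad !enorm_sqr -!EFinD; congr EFin.
    by field; rewrite gt_eqF.
  have unscale v : lam * (a * (lam^-1 * Q v) + (2 * lam)^-1 * sqn (v - xprev))
                   = a * Q v + 2^-1 * sqn (v - xprev).
    by field; rewrite gt_eqF.
  have Qmin v : Omega v ->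
      a * Q xk + 2^-1 * sqn (xk - xprev) <= a * Q v + 2^-1 * sqn (v - xprev).
    move=> Ov; have := xk_min v Ov.
    by rewrite !gkE -!EFinM -!EFinD lee_fin !enorm_sqr -!unscale ler_pM2l.
  have bound := aggregate_bound cvO Oxk Ou tau0 (ltW Ap0) a0 a2 eA ext Qmin.
  rewrite -/Q in bound.
  have descent := ler_wpM2l (ltW A0) (curvature_descent curv).
  rewrite !gkE -!EFinM -!EFinD lee_fin !enorm_sqr.
  have cancel c X : lam * c * (lam^-1 * X) = c * X by field; rewrite gt_eqF.
  rewrite !cancel.
  by have := mulr_ge0 (ltW A0) (mulr_ge0 tau0 (dotp_ge0 (yk - xt))); lra.
(* if h(y_k) = +oo the model is +oo everywhere and the right-hand side is +oo *)
have gk_oo v : gk v = +oo%E by rewrite /gk /gtilde eh addey // addye.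
by rewrite !gk_oo !gt0_muley ?lte_fin ?mulr_gt0 // !addye // leey.
Qed.
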